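(* In CCS, for every channel $a\in\mathcal{C}$ and all processes $x,y,z$: (1) $x\xrightarrow{\tau}y$ iff $x\to y$; (2) $x\xrightarrow{a}y$ iff $(x,\bar a.\mathbf{0})\to y$; (3) $x\xrightarrow{\bar a}y$ iff $(x,a.\mathbf{0})\to y$; (4) $(x,y)\to z$ iff there exist a channel $b$ and processes $x',y'$ with $z\equiv x'\parallel y'$ and either ($x\xrightarrow{b}x'$ and $y\xrightarrow{\bar b}y'$) or ($x\xrightarrow{\bar b}x'$ and $y\xrightarrow{b}y'$). Here $\xrightarrow{\alpha}$ is the CCS labelled transition relation and $\to$ is the reaction relation of the CCS dialgebra.
   Context: Let $\mathcal{C}$ be a countable set of channels. Prefixes: $\alpha::=\tau\mid a\mid\bar a$ ($a\in\mathcal{C}$). Processes: $P::=\sum_{i\in I}\alpha_i.P_i\mid P_1\parallel P_2\mid(\nu a)P$ with $I$ finite, sums taken up to reordering of summands; $\mathbf{0}$ is the empty sum, $\alpha.P$ a one-summand sum, and $\alpha.P+Q$ denotes a sum having $\alpha.P$ as a summand. Free names: $\mathit{fn}(\tau)=\emptyset$, $\mathit{fn}(a)=\mathit{fn}(\bar a)=\{a\}$, $\mathit{fn}(\sum\alpha_i.P_i)=\bigcup_i(\mathit{fn}(\alpha_i)\cup\mathit{fn}(P_i))$, $\mathit{fn}(P\parallel Q)=\mathit{fn}(P)\cup\mathit{fn}(Q)$, $\mathit{fn}((\nu a)P)=\mathit{fn}(P)\setminus\{a\}$. Structural congruence $\equiv$ is the least congruence containing $\alpha$-conversion of $a$ in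 $(\nu a)P$, the commutative monoid laws for $\parallel$ with unit $\mathbf{0}$, and $(\nu a)(P\parallel Q)\equiv((\nu a)P)\parallel Q$ if $a\notin\mathit{fn}(Q)$, $(\nu a)\mathbf{0}\equiv\mathbf{0}$, $(\nu a)(\nu b)P\equiv(\nu b)(\nu a)P$. The CCS LTS is the least relation $P\xrightarrow{\alpha}P'$ closed under: (pre) $\alpha.P+Q\xrightarrow{\alpha}P$; (res) if $a\notin\mathit{fn}(\alpha)$ and $P\xrightarrow{\alpha}P'$ then $(\nu a)P\xrightarrow{\alpha}(\nu a)P'$; (par) if $P\xrightarrow{\alpha}P'$ then $P\parallel Q\xrightarrow{\alpha}P'\parallel Q$; (syn) if $P\xrightarrow{\bar c}P'$ and $Q\xrightarrow{c}Q'$ then $P\parallel Q\xrightarrow{\tau}P'\parallel Q'$; (str) if $P\equiv Q$, $P'\equiv Q'$ and $P\xrightarrow{\alpha}P'$ then $Q\xrightarrow{\alpha}Q'$. The CCS dialgebra reaction relation consists of the least relations $P\to R$ (processes) and $(P,Q)\to R$ (pairs of processes) closed under: (tau) $\tau.P+Q\to P$; (res) $P\to P'$ implies $(\nu a)P\to(\nu a)P'$; (par$_1$) $P\to P'$ implies $P\parallel Q\to P'\parallel Q$; (int) $(P,Q)\to R$ implies $P\parallel Q\to R$; (hid) $(P,Q)\to R$ and $a\notin\mathit{fn}(Q)$ imply $((\nu a)P,Q)\to(\nu a)R$; (par$_2$) $(P,Q)\to R$ implies $(P\parallel S,Q)\to S\parallel R$; (syn) $(\bar a.P+S,a.Q+T)\to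 P\parallel Q$; (sym) $(P,Q)\to R$ implies $(Q,P)\to R$; (str$_1$) $P\to R$, $P\equiv Q$, $R\equiv S$ imply $Q\to S$; (str$_2$) $(P,Q)\to R$, $P\equiv S$, $Q\equiv T$, $R\equiv U$ imply $(S,T)\to U$. *)

From Stdlib Require Import List Permutation Arith.
Import ListNotations.

(* Channels: the countable set C is represented by nat. *)
Definition chan := nat.

Inductive prefix : Type :=
| ptau : prefix
| pin : chan -> prefix
| pout : chan -> prefix.

(* Processes: finite guarded sums (list of summands), parallel, restriction. *)
Inductive proc : Type :=
| Sum : list (prefix * proc) -> proc
| Par : proc -> proc -> proc
| Nu : chan -> proc -> proc.

Definition zero : proc := Sum [].
Definition pre (a : prefix) (P : proc) : proc := Sum [(a, P)].

Definition fn_pre (a : prefix) : list chan :=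
  match a with ptau => [] | pin c => [c] | pout c => [c] end.

Fixpoint fn (P : proc) : list chan :=
  match P with
  | Sum l => (fix fl (l : list (prefix * proc)) : list chan :=
                match l with
                | [] => []
                | (a, Q) :: l' => fn_pre a ++ fn Q ++ fl l'
                end) l
  | Par P Q => fn P ++ fn Q
  | Nu a P => remove Nat.eq_dec a (fn P)
  end.

(* Name swapping (a b); used to express alpha-conversion capture-free:
   (nu a)P == (nu b)((a b).P) whenever b is not free in P. *)
Definition swap_name (a b c : chan) : chan :=
  if Nat.eqb c a then b else if Nat.eqb c b then a else c.

Definition swap_pre (a b : chan) (p : prefix) : prefix :=
  match p with
  | ptau => ptau
  | pin c => pin (swap_name a b c)
  | pout c => pout (swap_name a b c)
  end.

Fixpoint swap (a b : chan) (P : proc) : proc :=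
  match P with
  | Sum l => Sum ((fix sl (l : list (prefix * proc)) : list (prefix * proc) :=
                     match l with
                     | [] => []
                     | (p, Q) :: l' => (swap_pre a b p, swap a b Q) :: sl l'
                     end) l)
  | Par P Q => Par (swap a b P) (swap a b Q)
  | Nu c P => Nu (swap_name a b c) (swap a b P)
  end.

(* Structural congruence. Sums are taken up to reordering of summands,
   which is built into the congruence (rule sc_sum_perm). *)
Inductive scong : proc -> proc -> Prop :=
| sc_refl P : scong P P
| sc_sym P Q : scong P Q -> scong Q P
| sc_trans P Q R : scong P Q -> scong Q R -> scong P R
| sc_sum_ctx l1 l2 a P P' :
    scong P P' -> scong (Sum (l1 ++ (a, P) :: l2)) (Sum (l1 ++ (a, P') :: l2))
| sc_par_ctx P P' Q Q' : scong P P' -> scong Q Q' -> scong (Par P Q) (Par P' Q')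
| sc_nu_ctx a P P' : scong P P' -> scong (Nu a P) (Nu a P')
| sc_sum_perm l l' : Permutation l l' -> scong (Sum l) (Sum l')
| sc_alpha a b P : ~ In b (fn (Nu a P)) -> scong (Nu a P) (Nu b (swap a b P))
| sc_par_comm P Q : scong (Par P Q) (Par Q P)
| sc_par_assoc P Q R : scong (Par (Par P Q) R) (Par P (Par Q R))
| sc_par_unit P : scong (Par P zero) P
| sc_scope a P Q : ~ In a (fn Q) -> scong (Nu a (Par P Q)) (Par (Nu a P) Q)
| sc_nu_zero a : scong (Nu a zero) zero
| sc_nu_comm a b P : scong (Nu a (Nu b P)) (Nu b (Nu a P)).

Inductive lts : proc -> prefix -> proc -> Prop :=
| lts_pre l1 l2 al P : lts (Sum (l1 ++ (al, P) :: l2)) al P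
| lts_res a al P P' : ~ In a (fn_pre al) -> lts P al P' -> lts (Nu a P) al (Nu a P')
| lts_par al P P' Q : lts P al P' -> lts (Par P Q) al (Par P' Q)
| lts_syn c P P' Q Q' : lts P (pout c) P' -> lts Q (pin c) Q' ->
    lts (Par P Q) ptau (Par P' Q')
| lts_str al P Q P' Q' : scong P Q -> scong P' Q' -> lts P al P' -> lts Q al Q'.

(* The CCS dialgebra reaction relations: red1 P R is "P -> R",
   red2 P Q R is "(P,Q) -> R". *)
Inductive red1 : proc -> proc -> Prop :=
| r_tau l1 l2 P : red1 (Sum (l1 ++ (ptau, P) :: l2)) P
| r_res a P P' : red1 P P' -> red1 (Nu a P) (Nu a P')
| r_par1 P P' Q : red1 P P' -> red1 (Par P Q) (Par P' Q)
| r_int P Q R : red2 P Q R -> red1 (Par P Q) R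
| r_str1 P Q R S : red1 P R -> scong P Q -> scong R S -> red1 Q S
with red2 : proc -> proc -> proc -> Prop :=
| r_hid a P Q R : red2 P Q R -> ~ In a (fn Q) -> red2 (Nu a P) Q (Nu a R)
| r_par2 P Q R S : red2 P Q R -> red2 (Par P S) Q (Par S R)
| r_syn a l1 l2 m1 m2 P Q :
    red2 (Sum (l1 ++ (pout a, P) :: l2)) (Sum (m1 ++ (pin a, Q) :: m2)) (Par P Q)
| r_sym P Q R : red2 P Q R -> red2 Q P R
| r_str2 P Q R S T U :
    red2 P Q R -> scong P S -> scong Q T -> scong R U -> red2 S T U.

From Stdlib Require Import List Permutation Arith Lia.
Import ListNotations.

(** Soundness ([red2_sound]): every binary reaction [(x, y) -> z] is, up to
    structural congruence, the combination [x' | y'] of two complementary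
    visible transitions of [x] and [y]; this is a direct induction on the
    reaction, using that transitions never create free names ([lts_fn]).

    Completeness ([react_transitions]): complementary visible transitions
    [x -co l-> x'] and [y -l-> y'] give a reaction [(x, y) -> x' | y'].  The delicate case is restriction,
    where the bound name may be free in the partner: the partner is renamed
    apart by a name swap ([red2_restrict]), which needs equivariance of
    structural congruence, transitions and reactions under swaps.

    The four clauses of the theorem follow: silent transitions correspond to
    unary reactions via rule (int); a visible transition of [x] is a reaction
    with the observer [co l . 0], whose only transition is inverted by a
    counting argument on weighted prefix occurrences ([prefix_transition]). *)

Ltac swap_cases :=
  unfold swap_name;
  repeat (match goal with
          | |- context [Nat.eqb ?u ?v] =>
              is_var u; is_var v; destruct (Nat.eqb_spec u v); [subst|]
          end; cbn; try rewrite Nat.eqb_refl);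
  try congruence.

Lemma swap_name_invol a b c : swap_name a b (swap_name a b c) = c.
Proof. swap_cases. Qed.

Lemma swap_name_conj x y a b c :
  swap_name x y (swap_name a b c) =
  swap_name (swap_name x y a) (swap_name x y b) (swap_name x y c).
Proof. swap_cases. Qed.

Lemma swap_name_l a b : swap_name a b a = b.
Proof. swap_cases. Qed.

Lemma swap_name_r a b : swap_name a b b = a.
Proof. swap_cases. Qed.

Lemma swap_name_fresh a b c : c <> a -> c <> b -> swap_name a b c = c.
Proof. swap_cases. Qed.

Lemma swap_name_inj a b c d : swap_name a b c = swap_name a b d -> c = d.
Proof. intro H. rewrite <- (swap_name_invol a b c), H. apply swap_name_invol. Qed.

Lemma In_map_swap_name a b c l :
  In c (map (swap_name a b) l) <-> In (swap_name a b c) l.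
Proof.
  rewrite in_map_iff. split.
  - intros [w [<- h]]. now rewrite swap_name_invol.
  - intro h. exists (swap_name a b c). now rewrite swap_name_invol.
Qed.

Lemma fresh_name (L : list chan) : exists d, ~ In d L.
Proof.
  exists (S (list_max L)). intro h.
  assert (Hmax : Forall (fun k => k <= list_max L) L) by (apply list_max_le; lia).
  rewrite Forall_forall in Hmax. specialize (Hmax _ h). lia.
Qed.

Lemma In_remove_iff a z l : In z (remove Nat.eq_dec a l) <-> In z l /\ z <> a.
Proof.
  split; [apply in_remove|]. intros [h n]. now apply in_in_remove.
Qed.

Fixpoint proc_nested_ind (Pr : proc -> Prop)
  (HSum : forall l, Forall (fun pq => Pr (snd pq)) l -> Pr (Sum l))
  (HPar : forall P Q, Pr P -> Pr Q -> Pr (Par P Q))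
  (HNu : forall a P, Pr P -> Pr (Nu a P)) (p : proc) : Pr p :=
  match p with
  | Sum l =>
      HSum l ((fix all_summands (l : list (prefix * proc))
                 : Forall (fun pq => Pr (snd pq)) l :=
                 match l with
                 | [] => Forall_nil _
                 | pq :: l' =>
                     Forall_cons _ (proc_nested_ind Pr HSum HPar HNu (snd pq))
                       (all_summands l')
                 end) l)
  | Par P Q => HPar P Q (proc_nested_ind Pr HSum HPar HNu P)
                 (proc_nested_ind Pr HSum HPar HNu Q)
  | Nu a P => HNu a P (proc_nested_ind Pr HSum HPar HNu P)
  end.

Lemma fn_Sum l :
  fn (Sum l) = flat_map (fun pq => fn_pre (fst pq) ++ fn (snd pq)) l.
Proof.
  induction l as [|[p Q] l IH]; simpl; auto.
  simpl in IH. now rewrite IH, app_assoc.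
Qed.

Lemma fn_summand l1 l2 p Y z :
  In z (fn_pre p) \/ In z (fn Y) -> In z (fn (Sum (l1 ++ (p, Y) :: l2))).
Proof.
  intro h. rewrite fn_Sum, in_flat_map. exists (p, Y).
  split; [apply in_or_app; simpl; auto | apply in_or_app; auto].
Qed.

Definition swap_summand a b (pq : prefix * proc) : prefix * proc :=
  (swap_pre a b (fst pq), swap a b (snd pq)).

Lemma swap_Sum a b l : swap a b (Sum l) = Sum (map (swap_summand a b) l).
Proof.
  induction l as [|[p Q] l IH]; simpl; auto.
  simpl in IH. injection IH as IH. now rewrite IH.
Qed.

Lemma remove_map_inj (f : chan -> chan) (f_inj : forall x y, f x = f y -> x = y)
  c l : remove Nat.eq_dec (f c) (map f l) = map f (remove Nat.eq_dec c l).
Proof.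
  induction l as [|d l IH]; simpl; auto.
  destruct (Nat.eq_dec (f c) (f d)) as [e|n]; destruct (Nat.eq_dec c d);
    subst; simpl; rewrite ?IH; auto.
  - apply f_inj in e. congruence.
  - congruence.
Qed.

Lemma fn_swap a b P : fn (swap a b P) = map (swap_name a b) (fn P).
Proof.
  induction P using proc_nested_ind.
  - rewrite swap_Sum, !fn_Sum, !flat_map_concat_map, concat_map, !map_map.
    f_equal. apply map_ext_in. intros [p Q] Hin.
    rewrite Forall_forall in H. specialize (H _ Hin). simpl in *.
    rewrite H, map_app. f_equal. destruct p; reflexivity.
  - simpl. now rewrite IHP1, IHP2, map_app.
  - simpl. rewrite IHP. apply remove_map_inj, swap_name_inj.
Qed.

Lemma swap_pre_conj x y a b p :
  swap_pre x y (swap_pre a b p) =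
  swap_pre (swap_name x y a) (swap_name x y b) (swap_pre x y p).
Proof. destruct p; simpl; try rewrite swap_name_conj; reflexivity. Qed.

Lemma swap_conj x y a b P :
  swap x y (swap a b P) =
  swap (swap_name x y a) (swap_name x y b) (swap x y P).
Proof.
  induction P using proc_nested_ind.
  - rewrite !swap_Sum, !map_map. f_equal. apply map_ext_in. intros [p Q] Hin.
    rewrite Forall_forall in H. specialize (H _ Hin).
    unfold swap_summand; simpl in *. now rewrite H, swap_pre_conj.
  - simpl. now rewrite IHP1, IHP2.
  - simpl. now rewrite IHP, swap_name_conj.
Qed.

Lemma swap_invol a b P : swap a b (swap a b P) = P.
Proof.
  induction P using proc_nested_ind.
  - rewrite !swap_Sum, map_map. f_equal. rewrite <- map_id. apply map_ext_in.
    intros [p Q] Hin. rewrite Forall_forall in H. specialize (H _ Hin).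
    unfold swap_summand; simpl in *. rewrite H.
    destruct p; simpl; now rewrite ?swap_name_invol.
  - simpl. now rewrite IHP1, IHP2.
  - simpl. now rewrite IHP, swap_name_invol.
Qed.

Lemma swap_pre_fresh a b p :
  ~ In a (fn_pre p) -> ~ In b (fn_pre p) -> swap_pre a b p = p.
Proof.
  destruct p; simpl; auto; intros h1 h2; rewrite swap_name_fresh; auto.
Qed.

Lemma scong_swap x y P Q : scong P Q -> scong (swap x y P) (swap x y Q).
Proof.
  induction 1; rewrite ?swap_Sum, ?map_app; simpl.
  - apply sc_refl.
  - now apply sc_sym.
  - eapply sc_trans; eauto.
  - now apply sc_sum_ctx.
  - now apply sc_par_ctx.
  - now apply sc_nu_ctx.
  - now apply sc_sum_perm, Permutation_map.
  - rewrite swap_conj. apply sc_alpha.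
    change (Nu _ (swap x y P)) with (swap x y (Nu a P)).
    now rewrite fn_swap, In_map_swap_name, swap_name_invol.
  - apply sc_par_comm.
  - apply sc_par_assoc.
  - apply sc_par_unit.
  - apply sc_scope. now rewrite fn_swap, In_map_swap_name, swap_name_invol.
  - apply sc_nu_zero.
  - apply sc_nu_comm.
Qed.

Lemma scong_fn P Q : scong P Q -> forall z, In z (fn P) <-> In z (fn Q).
Proof.
  induction 1; intro z; rewrite ?fn_Sum; simpl; rewrite ?in_app_iff.
  - tauto.
  - now rewrite IHscong.
  - now rewrite IHscong1.
  - rewrite !flat_map_app. simpl. rewrite !in_app_iff, IHscong. tauto.
  - now rewrite IHscong1, IHscong2.
  - rewrite !In_remove_iff, IHscong. tauto.
  - rewrite !in_flat_map. split; intros [w [h1 h2]]; exists w; split; auto.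
    + eapply Permutation_in; eauto.
    + eapply Permutation_in; [apply Permutation_sym|]; eauto.
  - simpl in H. rewrite In_remove_iff in H.
    rewrite !In_remove_iff, fn_swap.
    rewrite In_map_swap_name.
    destruct (Nat.eq_dec z a); [subst; rewrite swap_name_l; intuition|].
    destruct (Nat.eq_dec z b); [subst; rewrite swap_name_r; tauto|].
    rewrite swap_name_fresh by auto. tauto.
  - tauto.
  - tauto.
  - simpl. tauto.
  - rewrite !In_remove_iff, in_app_iff. intuition congruence.
  - tauto.
  - rewrite !In_remove_iff. tauto.
Qed.

Lemma fn_pre_swap a b p : fn_pre (swap_pre a b p) = map (swap_name a b) (fn_pre p).
Proof. destruct p; reflexivity. Qed.

Lemma lts_swap a b P l P' :
  lts P l P' -> lts (swap a b P) (swap_pre a b l) (swap a b P').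
Proof.
  induction 1 as [l1 l2 al P | c al P P' Hc HP IH | al P P' Q HP IH
                 | c P P' Q Q' HP IHP HQ IHQ | al P Q P' Q' HPQ HPQ' HP IH].
  - rewrite swap_Sum, map_app. apply lts_pre.
  - apply lts_res; auto. now rewrite fn_pre_swap, In_map_swap_name, swap_name_invol.
  - now apply lts_par.
  - simpl in *. now apply (lts_syn (swap_name a b c)).
  - eapply lts_str; [apply scong_swap, HPQ | apply scong_swap, HPQ' | exact IH].
Qed.

Lemma red2_swap a b P Q R :
  red2 P Q R -> red2 (swap a b P) (swap a b Q) (swap a b R).
Proof.
  induction 1 as [c P Q R H IH Hc | P Q R S H IH | c l1 l2 m1 m2 P Q | P Q R H IH
                 | P Q R S T U H IH HS HT HU].
  - apply r_hid; auto. now rewrite fn_swap, In_map_swap_name, swap_name_invol.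
  - now apply r_par2.
  - rewrite !swap_Sum, !map_app. apply r_syn.
  - now apply r_sym.
  - eapply r_str2; [exact IH | apply scong_swap .. ]; assumption.
Qed.

Lemma lts_fn P l P' : lts P l P' ->
  (forall z, In z (fn P') -> In z (fn P)) /\ (forall z, In z (fn_pre l) -> In z (fn P)).
Proof.
  induction 1 as [l1 l2 al P | a al P P' Ha HP IH | al P P' Q HP IH
                 | c P P' Q Q' HP IHP HQ IHQ | al P Q P' Q' HPQ HPQ' HP IH].
  - split; intros z h; apply fn_summand; auto.
  - destruct IH as [I1 I2]. simpl. split; intros z; rewrite ?In_remove_iff.
    + intros [h n]. auto.
    + intro h. split; auto. intros ->. auto.
  - destruct IH as [I1 I2]. simpl. split; intros z; rewrite ?in_app_iff; intuition.
  - destruct IHP as [I1 _]; destruct IHQ as [J1 _]. simpl.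
    split; intros z; rewrite ?in_app_iff; intuition.
  - destruct IH as [I1 I2]. split; intros z h.
    + apply (scong_fn _ _ HPQ), I1, (scong_fn _ _ HPQ'); auto.
    + apply (scong_fn _ _ HPQ), I2; auto.
Qed.

Definition co (p : prefix) : prefix :=
  match p with ptau => ptau | pin b => pout b | pout b => pin b end.

Lemma co_involutive p : co (co p) = p.
Proof. now destruct p. Qed.

Lemma fn_pre_co p : fn_pre (co p) = fn_pre p.
Proof. now destruct p. Qed.

Lemma swap_pre_co_fresh a d p :
  ~ In a (fn_pre p) -> ~ In d (fn_pre p) -> swap_pre a d (co p) = co p.
Proof. intros; apply swap_pre_fresh; now rewrite fn_pre_co. Qed.

Lemma red2_flip P Q R S : red2 P Q (Par R S) -> red2 Q P (Par S R).
Proof.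
  intro H. eapply r_str2; [apply r_sym, H | apply sc_refl | apply sc_refl | apply sc_par_comm].
Qed.

Lemma red2_par_left P Q P' Q' S :
  red2 P Q (Par P' Q') -> red2 (Par P S) Q (Par (Par P' S) Q').
Proof.
  intro H. eapply r_str2; [apply r_par2, H | apply sc_refl | apply sc_refl |].
  eapply sc_trans; [apply sc_sym, sc_par_assoc | apply sc_par_ctx, sc_refl].
  apply sc_par_comm.
Qed.

Lemma alpha_fresh a d P : ~ In d (fn P) -> scong (Nu d (swap a d P)) (Nu a P).
Proof.
  intro h. apply sc_sym, sc_alpha. simpl. rewrite In_remove_iff. tauto.
Qed.

(** Scope extrusion for reactions: a restricted name of the left process may clash
    with the free names of the partner, so the partner is first renamed apart with
    a fresh [d], and the result is then transported back by equivariance. *)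
Lemma red2_restrict a d P P' Q Q' :
  ~ In d (fn P) -> ~ In d (fn P') -> ~ In d (fn Q) -> ~ In d (fn Q') ->
  red2 P (swap a d Q) (Par P' (swap a d Q')) ->
  red2 (Nu a P) Q (Par (Nu a P') Q').
Proof.
  intros HP HP' HQ HQ' H.
  assert (Hnu : red2 (Nu a P) (swap a d Q) (Nu a (Par P' (swap a d Q')))).
  { apply r_hid; auto. now rewrite fn_swap, In_map_swap_name, swap_name_l. }
  apply (red2_swap a d) in Hnu. simpl in Hnu.
  rewrite swap_name_l, !swap_invol in Hnu.
  eapply r_str2; [exact Hnu | apply alpha_fresh, HP | apply sc_refl |].
  eapply sc_trans; [apply sc_scope, HQ' | apply sc_par_ctx, sc_refl].
  apply alpha_fresh, HP'.
Qed.

Lemma react_prefix x l x' : lts x l x' -> l <> ptau ->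
  forall m1 m2 Y, red2 x (Sum (m1 ++ (co l, Y) :: m2)) (Par x' Y).
Proof.
  induction 1 as [l1 l2 al P | a al P P' Ha HP IH | al P P' Q HP IH
                 | c P P' Q Q' _ _ _ _ | al P Q P' Q' HPQ HPQ' HP IH];
    intros Hl m1 m2 Y.
  - destruct al as [|b|b]; [congruence| |apply r_syn].
    apply red2_flip, r_syn.
  - set (Q := Sum (m1 ++ (co al, Y) :: m2)).
    destruct (fresh_name (fn P ++ fn P' ++ fn Q ++ fn Y)) as [d Hd].
    rewrite !in_app_iff in Hd.
    apply (red2_restrict a d); try tauto.
    unfold Q. rewrite swap_Sum, map_app. unfold swap_summand at 2. simpl.
    rewrite swap_pre_co_fresh; auto.
    intro h. apply Hd. right; right; left. apply fn_summand. rewrite fn_pre_co. auto.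
  - apply red2_par_left, IH, Hl.
  - congruence.
  - eapply r_str2; [apply IH, Hl | exact HPQ | apply sc_refl |].
    apply sc_par_ctx; [exact HPQ' | apply sc_refl].
Qed.

Lemma react_transitions y l y' : lts y l y' -> l <> ptau ->
  forall x x', lts x (co l) x' -> red2 x y (Par x' y').
Proof.
  induction 1 as [l1 l2 al P | a al P P' Ha HP IH | al P P' Q HP IH
                 | c P P' Q Q' _ _ _ _ | al P Q P' Q' HPQ HPQ' HP IH];
    intros Hl x x' Hx.
  - rewrite <- (co_involutive al). apply (react_prefix x (co al)); auto.
    destruct al; simpl; congruence.
  - destruct (fresh_name (fn x ++ fn x' ++ fn P ++ fn P')) as [d Hd].
    rewrite !in_app_iff in Hd.
    apply red2_flip, (red2_restrict a d); try tauto.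
    apply red2_flip, IH; auto.
    rewrite <- (swap_pre_co_fresh a d al); auto using lts_swap.
    intro h. apply Hd. left. apply (lts_fn _ _ _ Hx). now rewrite fn_pre_co.
  - apply red2_flip, red2_par_left, red2_flip, IH; auto.
  - congruence.
  - eapply r_str2; [apply IH, Hx; exact Hl | apply sc_refl | exact HPQ |].
    apply sc_par_ctx; [apply sc_refl | exact HPQ'].
Qed.

Lemma red2_sound x y z : red2 x y z ->
  exists (b : chan) (x' y' : proc), scong z (Par x' y') /\
    ((lts x (pin b) x' /\ lts y (pout b) y') \/
     (lts x (pout b) x' /\ lts y (pin b) y')).
Proof.
  induction 1 as [a P Q R H IH Ha | P Q R S H IH | a l1 l2 m1 m2 P Q | P Q R H IH
                 | P Q R S T U H IH HS HT HU];
    try destruct IH as [b [x' [y' [Hs Hd]]]].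
  - (* the partner's transition cannot mention the name restricted on the left *)
    assert (Hy : forall l, lts Q l y' -> ~ In a (fn y') /\ ~ In a (fn_pre l)).
    { intros l hl. destruct (lts_fn _ _ _ hl) as [h1 h2]. split; auto. }
    exists b, (Nu a x'), y'. split.
    + eapply sc_trans; [apply sc_nu_ctx, Hs | apply sc_scope].
      destruct Hd as [[_ h]|[_ h]]; apply Hy in h; tauto.
    + destruct Hd as [[h1 h]|[h1 h]]; [left|right]; split; auto;
        apply lts_res; auto; apply Hy in h; simpl in *; tauto.
  - exists b, (Par x' S), y'. split.
    + eapply sc_trans; [apply sc_par_ctx; [apply sc_refl | exact Hs] |].
      eapply sc_trans; [apply sc_sym, sc_par_assoc | apply sc_par_ctx, sc_refl].
      apply sc_par_comm.
    + destruct Hd as [[h1 h]|[h1 h]]; [left|right]; split; auto; now apply lts_par.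
  - exists a, P, Q. split; [apply sc_refl | right; split; apply lts_pre].
  - exists b, y', x'. split; [eapply sc_trans; [exact Hs | apply sc_par_comm] | tauto].
  - exists b, x', y'. split; [eapply sc_trans; [apply sc_sym, HU | exact Hs] |].
    destruct Hd as [[h1 h]|[h1 h]]; [left|right]; split;
      eapply lts_str; eauto using sc_refl.
Qed.

Fixpoint weight (f : prefix -> nat) (P : proc) : nat :=
  match P with
  | Sum l => (fix weight_sum (l : list (prefix * proc)) : nat :=
               match l with
               | [] => 0
               | (p, Q) :: l' => f p + weight f Q + weight_sum l'
               end) l
  | Par P Q => weight f P + weight f Q
  | Nu _ P => weight f P
  end.

Lemma weight_Sum f l :
  weight f (Sum l) = list_sum (map (fun pq => f (fst pq) + weight f (snd pq)) l).
Proof. induction l as [|[p Q] l IH]; simpl; auto. Qed.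

Section Weight.
Variable f : prefix -> nat.
Hypothesis f_swap : forall a b p, f (swap_pre a b p) = f p.

Lemma weight_swap a b P : weight f (swap a b P) = weight f P.
Proof.
  induction P using proc_nested_ind.
  - rewrite swap_Sum, !weight_Sum, map_map. f_equal. apply map_ext_in.
    intros [p Q] h. rewrite Forall_forall in H. specialize (H _ h).
    simpl in *. now rewrite H, f_swap.
  - simpl. lia.
  - simpl. auto.
Qed.

Lemma weight_scong P Q : scong P Q -> weight f P = weight f Q.
Proof.
  induction 1; try (simpl; lia).
  - rewrite !weight_Sum, !map_app, !list_sum_app. simpl. lia.
  - rewrite !weight_Sum. now apply Permutation_list_sum, Permutation_map.
  - simpl. now rewrite weight_swap.
Qed.

Lemma weight_lts P l P' : lts P l P' ->
  weight f P' + f l <= weight f P \/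
  (exists c, l = ptau /\ weight f P' + f (pout c) + f (pin c) <= weight f P).
Proof.
  induction 1 as [l1 l2 al P | a al P P' Ha HP IH | al P P' Q HP IH
                 | c P P' Q Q' HP IHP HQ IHQ | al P Q P' Q' HPQ HPQ' HP IH].
  - left. rewrite weight_Sum, map_app, list_sum_app. simpl. lia.
  - simpl. auto.
  - simpl. destruct IH as [h|[c [e h]]]; [left; lia | right; exists c; split; auto; lia].
  - right. exists c. split; auto. simpl.
    destruct IHP as [h|[c' [e h]]]; [|discriminate].
    destruct IHQ as [h'|[c'' [e h']]]; [|discriminate]. lia.
  - now rewrite <- (weight_scong _ _ HPQ), <- (weight_scong _ _ HPQ').
Qed.
End Weight.

Lemma weight_zero P : weight (fun _ => 1) P = 0 -> scong P zero.
Proof.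
  induction P as [l|P IHP Q IHQ|a P IHP]; intro H; simpl in H.
  - destruct l as [|[p Q] l]; [apply sc_refl | lia].
  - eapply sc_trans; [apply sc_par_ctx; [apply IHP | apply IHQ]; lia | apply sc_par_unit].
  - eapply sc_trans; [apply sc_nu_ctx, IHP; auto | apply sc_nu_zero].
Qed.

Definition mismatch (p0 p : prefix) : nat :=
  match p0, p with
  | pin _, pin _ | pout _, pout _ => 0
  | _, _ => 1
  end.

Lemma prefix_transition p0 l Y :
  p0 <> ptau -> lts (pre p0 zero) l Y -> l = p0 /\ scong Y zero.
Proof.
  intros Hp0 H.
  assert (Hdir : mismatch p0 l = 0).
  { destruct (weight_lts (mismatch p0) ltac:(now destruct p0, p) _ _ _ H)
      as [h|[c [_ h]]]; destruct p0; simpl in *; try lia; congruence. }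
  assert (Hvis : l <> ptau) by (intros ->; destruct p0; discriminate).
  assert (Hname : forall z, In z (fn_pre l) -> In z (fn_pre p0)).
  { intros z h. apply (lts_fn _ _ _ H) in h. simpl in h. now rewrite !app_nil_r in h. }
  split.
  - destruct p0, l; simpl in *; try discriminate;
      f_equal; destruct (Hname _ (or_introl eq_refl)) as [e|[]]; auto.
  - apply weight_zero.
    destruct (weight_lts (fun _ => 1) ltac:(reflexivity) _ _ _ H) as [h|[c [e h]]];
      simpl in h; [lia | congruence].
Qed.

Lemma tau_red1 x y : lts x ptau y -> red1 x y.
Proof.
  remember ptau as t eqn:Et. induction 1; subst.
  - apply r_tau.
  - now apply r_res, IHlts.
  - now apply r_par1, IHlts.
  - apply r_int. apply (react_transitions Q (pin c) Q'); auto. discriminate.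
  - eapply r_str1; eauto.
Qed.

(** Conversely, unary reactions are silent transitions; rule (int) is a
    synchronisation by soundness of binary reactions. *)
Lemma red1_tau x y : red1 x y -> lts x ptau y.
Proof.
  induction 1 as [l1 l2 P | a P P' H IH | P P' Q H IH | P Q R H | P Q R S H IH HPQ HRS].
  - apply lts_pre.
  - now apply lts_res.
  - now apply lts_par.
  - destruct (red2_sound _ _ _ H) as [b [x' [y' [Hs [[h1 h2]|[h1 h2]]]]]].
    + eapply lts_str; [apply sc_par_comm | |apply (lts_syn b), h1; exact h2].
      apply sc_sym. eapply sc_trans; [exact Hs | apply sc_par_comm].
    + eapply lts_str; [apply sc_refl | apply sc_sym, Hs | now apply (lts_syn b)].
  - eapply lts_str; eauto.
Qed.

Lemma visible_red2 p0 x y : p0 <> ptau ->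
  (lts x (co p0) y <-> red2 x (pre p0 zero) y).
Proof.
  intro Hp0. split; intro H.
  - eapply r_str2; [| apply sc_refl | apply sc_refl | apply sc_par_unit].
    apply (react_transitions _ p0 zero); auto. exact (lts_pre [] [] p0 zero).
  - destruct (red2_sound _ _ _ H) as [b [x' [y' [Hs Hd]]]].
    assert (Hx : lts x (co p0) x' /\ scong y' zero).
    { destruct Hd as [[h1 h2]|[h1 h2]];
        destruct (prefix_transition _ _ _ Hp0 h2) as [<- hz]; auto. }
    destruct Hx as [h1 hz].
    eapply lts_str; [apply sc_refl | | exact h1].
    apply sc_sym. eapply sc_trans; [exact Hs |].
    eapply sc_trans; [apply sc_par_ctx; [apply sc_refl | exact hz] | apply sc_par_unit].
Qed.

Theorem lemma1 : forall (a : chan) (x y z : proc),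
  (lts x ptau y <-> red1 x y) /\
  (lts x (pin a) y <-> red2 x (pre (pout a) zero) y) /\
  (lts x (pout a) y <-> red2 x (pre (pin a) zero) y) /\
  (red2 x y z <->
     exists (b : chan) (x' y' : proc), scong z (Par x' y') /\
       ((lts x (pin b) x' /\ lts y (pout b) y') \/
        (lts x (pout b) x' /\ lts y (pin b) y'))).
Proof.
  intros a x y z. split; [|split; [|split]].
  - split; [apply tau_red1 | apply red1_tau].
  - apply (visible_red2 (pout a)); discriminate.
  - apply (visible_red2 (pin a)); discriminate.
  - split; [apply red2_sound |].
    intros [b [x' [y' [Hs Hd]]]].
    eapply r_str2; [| apply sc_refl | apply sc_refl | apply sc_sym, Hs].
    destruct Hd as [[h1 h2]|[h1 h2]].
    + apply (react_transitions y (pout b)); auto; discriminate.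
    + apply (react_transitions y (pin b)); auto; discriminate.
Qed.
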